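(* Let $0<z_0<1$, $t>0$ and $r=e^t$. Then: (1) the largest $s>0$ with $B_\rho(z_0,s)\subset B_h(z_0,t)$ is $s=t$; (2) the smallest $s>0$ with $B_h(z_0,t)\subset B_\rho(z_0,s)$ is the number $s$ satisfying $$\operatorname{th}\frac{s}{2}=\frac{r-1}{\sqrt{(r+1)^2-4rz_0^2}}.$$
   Context: $\mathbb{B}^2$ is the open unit disk in $\mathbb{C}$. The hyperbolic metric is given by $\operatorname{sh}\frac{\rho_{\mathbb{B}^2}(x,y)}{2}=\frac{|x-y|}{\sqrt{(1-|x|^2)(1-|y|^2)}}$, and $B_\rho(z_0,s)=\{z\in\mathbb{B}^2:\rho_{\mathbb{B}^2}(z_0,z)<s\}$. For distinct $x,y\in\mathbb{B}^2$ the Hilbert metric is $h_{\mathbb{B}^2}(x,y)=\log\frac{|u-y||x-v|}{|u-x||y-v|}$, where $u,v$ are the intersection points of the line through $x,y$ with the unit circle, labelled so that $|u-x|<|u-y|$; $h_{\mathbb{B}^2}(x,x)=0$; and $B_h(z_0,t)=\{z\in\mathbb{B}^2:h_{\mathbb{B}^2}(z_0,z)<t\}$. *)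

From Stdlib Require Import Reals ClassicalEpsilon.
From Coquelicot Require Import Coquelicot.
Open Scope R_scope.

Definition in_disk (z : C) : Prop := Cmod z < 1.

Definition rho_disk (x y : C) : R :=
  2 * arcsinh (Cmod (x - y)%C / sqrt ((1 - Cmod x ^ 2) * (1 - Cmod y ^ 2))).

Definition hilbert_endpoints (x y u v : C) : Prop :=
  Cmod u = 1 /\ Cmod v = 1 /\ u <> v /\
  (exists a : R, u = (x + RtoC a * (y - x))%C) /\
  (exists b : R, v = (x + RtoC b * (y - x))%C) /\
  Cmod (u - x)%C < Cmod (u - y)%C.

(* Hilbert metric on the disk (u, v are uniquely determined for x <> y). *)
Definition hilbert_disk (x y : C) : R :=
  epsilon (inhabits 0) (fun d =>
    (x = y /\ d = 0) \/
    (x <> y /\ exists u v, hilbert_endpoints x y u v /\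
       d = ln ((Cmod (u - y)%C * Cmod (x - v)%C) / (Cmod (u - x)%C * Cmod (y - v)%C)))).

Definition ball_rho (z0 : C) (s : R) (z : C) : Prop :=
  in_disk z /\ rho_disk z0 z < s.

Definition ball_h (z0 : C) (t : R) (z : C) : Prop :=
  in_disk z /\ hilbert_disk z0 z < t.

Definition set_incl (A B : C -> Prop) : Prop := forall z, A z -> B z.

From Stdlib Require Import Reals Lra Psatz ClassicalEpsilon.
From Coquelicot Require Import Coquelicot.
Open Scope R_scope.

(* For [x <> y] in the disk, the points [x + l (y - x)] of the unit circle have parameters
   [a < 0 < 1 < b], the roots of a quadratic in [l]. Both metrics are explicit in [a, b]:
   [h(x, y) = ln ((1 - a) b / (-a (b - 1)))], and Vieta's formulas turn the definition of [rho]
   into [sh^2(rho/2) (A (1 - |x|^2) + <x, y - x>^2) = A sh^2(h/2)] with [A = |y - x|^2]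
   and the real inner product [<x, d> = Re (x * Cconj d)].
   The bracket lies between [A (1 - |x|^2)] and [A], so [h <= rho] and
   [(1 - |x|^2) sh^2(rho/2) <= sh^2(h/2)], with equality along the diameter through [x] and
   along the chord perpendicular to it. The first bound gives B_rho(t) in B_h(t), the second
   B_h(t) in B_rho(s) as soon as [sh(s/2) = sh(t/2) / sqrt(1 - z0^2)]; points on the two
   extremal chords show both radii are optimal. *)

Lemma sinh_half_sqr u : 4 * exp u * sinh (u / 2) ^ 2 = (exp u - 1) ^ 2.
Proof.
  unfold sinh. replace u with (u / 2 + u / 2) at 1 4 by field.
  rewrite exp_plus, exp_Ropp. pose proof (exp_pos (u / 2)). field. lra.
Qed.

Lemma sinh_half_ln_sqr R : 0 < R -> 4 * R * sinh (ln R / 2) ^ 2 = (R - 1) ^ 2.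
Proof. intro HR. pose proof (sinh_half_sqr (ln R)) as E. rewrite exp_ln in E by exact HR. exact E. Qed.

Lemma sinh_pos u : 0 < u -> 0 < sinh u.
Proof. intro Hu. rewrite <- sinh_0. exact (sinh_lt _ _ Hu). Qed.

Lemma sinh_nonneg u : 0 <= u -> 0 <= sinh u.
Proof. intros [Hu | <-]; [left; exact (sinh_pos u Hu) | rewrite sinh_0; lra]. Qed.

Lemma sinh_sqr_lt_iff u v : 0 <= u -> 0 <= v -> sinh u ^ 2 < sinh v ^ 2 <-> u < v.
Proof.
  intros Hu Hv. pose proof (sinh_nonneg u Hu) as Su. pose proof (sinh_nonneg v Hv) as Sv.
  split; intro H.
  - destruct (Rlt_or_le u v) as [Huv | [Hvu | Hvu]]; [exact Huv | | subst; lra].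
    pose proof (sinh_lt _ _ Hvu). nra.
  - pose proof (sinh_lt _ _ H). nra.
Qed.

Lemma sinh_sqr_le_iff u v : 0 <= u -> 0 <= v -> sinh u ^ 2 <= sinh v ^ 2 <-> u <= v.
Proof.
  intros Hu Hv. pose proof (sinh_sqr_lt_iff v u Hv Hu) as [H1 H2].
  split; intro H; apply Rnot_lt_le; intro C; [apply H2 in C | apply H1 in C]; lra.
Qed.

Lemma sinh_sqr_inj u v : 0 <= u -> 0 <= v -> sinh u ^ 2 = sinh v ^ 2 -> u = v.
Proof.
  intros Hu Hv E. apply Rle_antisym; [apply (sinh_sqr_le_iff u v) | apply (sinh_sqr_le_iff v u)]; lra.
Qed.

Lemma cosh_sqrt u : cosh u = sqrt (1 + sinh u ^ 2).
Proof.
  assert (E : 1 + sinh u ^ 2 = cosh u ^ 2).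
  { unfold sinh, cosh. rewrite exp_Ropp. pose proof (exp_pos u). field. lra. }
  rewrite E, sqrt_pow2; [reflexivity |].
  unfold cosh. pose proof (exp_pos u); pose proof (exp_pos (- u)). lra.
Qed.

Lemma tanh_arcsinh x : tanh (arcsinh x) = x / sqrt (1 + x ^ 2).
Proof. unfold tanh. rewrite cosh_sqrt, sinh_arcsinh. reflexivity. Qed.

Lemma Cmod_eq_1_sqr w : Cmod w = 1 <-> Cmod w ^ 2 = 1.
Proof. pose proof (Cmod_ge_0 w) as Hw. split; intro H; [rewrite H |]; nra. Qed.

Lemma Cmod_sqr_lt_1 w : in_disk w -> Cmod w ^ 2 < 1.
Proof. unfold in_disk. pose proof (Cmod_ge_0 w). nra. Qed.

Lemma Cmod_sqr_add_scal (x d : C) (l : R) :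
  Cmod (x + RtoC l * d) ^ 2 = Cmod x ^ 2 + 2 * l * Re (x * Cconj d) + l ^ 2 * Cmod d ^ 2.
Proof.
  rewrite !Cmod2_alt. destruct x as [x1 x2], d as [d1 d2].
  unfold Re, Im, Cconj, Cplus, Cmult, RtoC; simpl. ring.
Qed.

Lemma Cmod_eq_scal (w d : C) (k : R) : w = (RtoC k * d)%C -> Cmod w = Rabs k * Cmod d.
Proof. intros ->. rewrite Cmod_mult, Cmod_R. reflexivity. Qed.

Lemma Cmod_sub_pos (x y : C) : x <> y -> 0 < Cmod (y - x).
Proof.
  intro Hxy. apply Cmod_gt_0. intro E. apply Hxy.
  replace y with ((y - x) + x)%C by ring. rewrite E. ring.
Qed.

Lemma quadratic_vieta A B C a b : a <> b ->
  A * a ^ 2 + 2 * B * a + C = 0 -> A * b ^ 2 + 2 * B * b + C = 0 ->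
  A * (a + b) = - 2 * B /\ A * (a * b) = C.
Proof.
  intros Hab Ha Hb.
  assert (Hs : A * (a + b) = - 2 * B).
  { apply (Rmult_eq_reg_r (a - b)); [nra | lra]. }
  split; [exact Hs | nra].
Qed.

Lemma quadratic_root_cases A B C a b l : A <> 0 -> a <> b ->
  A * a ^ 2 + 2 * B * a + C = 0 -> A * b ^ 2 + 2 * B * b + C = 0 ->
  A * l ^ 2 + 2 * B * l + C = 0 -> l = a \/ l = b.
Proof.
  intros HA Hab Ha Hb Hl. destruct (quadratic_vieta A B C a b Hab Ha Hb) as [Vs Vp].
  assert (F : A * ((l - a) * (l - b)) = 0) by nra.
  apply Rmult_integral in F as [F | F]; [contradiction |].
  apply Rmult_integral in F as [F | F]; [left | right]; lra.
Qed.

Lemma unit_circle_line (x d : C) (l : R) :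
  Cmod (x + RtoC l * d) = 1 <->
  Cmod d ^ 2 * l ^ 2 + 2 * Re (x * Cconj d) * l + (Cmod x ^ 2 - 1) = 0.
Proof. rewrite Cmod_eq_1_sqr, Cmod_sqr_add_scal. lra. Qed.

Lemma chord_params x y : in_disk x -> in_disk y -> x <> y ->
  exists a b, a < 0 /\ 1 < b /\
    Cmod (x + RtoC a * (y - x)) = 1 /\ Cmod (x + RtoC b * (y - x)) = 1.
Proof.
  intros Hx Hy Hxy.
  set (A := Cmod (y - x) ^ 2). set (B := Re (x * Cconj (y - x))). set (X := Cmod x ^ 2).
  assert (HA : 0 < A) by (apply pow_lt, Cmod_sub_pos, Hxy).
  assert (HX : X < 1) by exact (Cmod_sqr_lt_1 x Hx).
  assert (HY : X + 2 * B + A < 1).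
  { pose proof (Cmod_sqr_add_scal x (y - x) 1) as E.
    replace (x + RtoC 1 * (y - x))%C with y in E by ring.
    pose proof (Cmod_sqr_lt_1 y Hy). fold A B X in E. lra. }
  (* the roots of [A l^2 + 2 B l + (X - 1)], which is negative at [l = 0] and at [l = 1] *)
  set (D := sqrt (B ^ 2 + A * (1 - X))).
  assert (HD : D ^ 2 = B ^ 2 + A * (1 - X)) by (apply pow2_sqrt; nra).
  assert (HD0 : 0 <= D) by apply sqrt_pos.
  assert (root : forall l, A * l = - B + D \/ A * l = - B - D ->
    Cmod (x + RtoC l * (y - x)) = 1).
  { intros l Hl. apply unit_circle_line. fold A B X.
    apply (Rmult_eq_reg_l A); [| lra].
    replace (A * (A * l ^ 2 + 2 * B * l + (X - 1))) with ((A * l) ^ 2 + 2 * B * (A * l) + A * (X - 1)) by ring.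
    destruct Hl as [-> | ->]; nra. }
  exists ((- B - D) / A), ((- B + D) / A).
  assert (Ea : A * ((- B - D) / A) = - B - D) by (field; lra).
  assert (Eb : A * ((- B + D) / A) = - B + D) by (field; lra).
  split; [| split; [| split]].
  - apply (Rmult_lt_reg_l A); [exact HA |]. rewrite Ea. nra.
  - apply (Rmult_lt_reg_l A); [exact HA |]. rewrite Eb. nra.
  - apply root. right. exact Ea.
  - apply root. left. exact Eb.
Qed.

Lemma hilbert_disk_refl x : hilbert_disk x x = 0.
Proof.
  unfold hilbert_disk.
  match goal with |- epsilon ?i ?P = _ =>
    assert (HP : P (epsilon i P)) by (apply epsilon_spec; exists 0; left; split; reflexivity) end.
  destruct HP as [[_ E] | [E _]]; [exact E | contradiction].
Qed.

Lemma hilbert_disk_spec x y h : x <> y ->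
  (exists u v, hilbert_endpoints x y u v) ->
  (forall u v, hilbert_endpoints x y u v ->
     ln ((Cmod (u - y)%C * Cmod (x - v)%C) / (Cmod (u - x)%C * Cmod (y - v)%C)) = h) ->
  hilbert_disk x y = h.
Proof.
  intros Hxy [u [v Huv]] Hval. unfold hilbert_disk.
  match goal with |- epsilon ?i ?P = _ =>
    assert (HP : P (epsilon i P)) by
      (apply epsilon_spec; eexists; right; split; [exact Hxy | exists u, v; split; [exact Huv | reflexivity]]) end.
  destruct HP as [[E _] | [_ [u' [v' [Huv' ->]]]]]; [contradiction | exact (Hval u' v' Huv')].
Qed.

Lemma hilbert_disk_chord x y a b : x <> y -> a < 0 -> 1 < b ->
  Cmod (x + RtoC a * (y - x)) = 1 -> Cmod (x + RtoC b * (y - x)) = 1 ->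
  hilbert_disk x y = ln ((1 - a) * b / (- a * (b - 1))).
Proof.
  intros Hxy Ha Hb Hau Hbv. set (d := (y - x)%C) in *.
  pose proof (Cmod_sub_pos x y Hxy) as Hd. fold d in Hd.
  set (A := Cmod d ^ 2). set (B := Re (x * Cconj d)). set (C0 := Cmod x ^ 2 - 1).
  assert (HA : A <> 0) by (apply pow_nonzero; lra).
  assert (Hab : a <> b) by lra.
  assert (roots : forall l, Cmod (x + RtoC l * d) = 1 -> l = a \/ l = b).
  { intros l Hl. apply (quadratic_root_cases A B C0 a b l HA Hab); apply unit_circle_line; assumption. }
  assert (Dx : forall k, Cmod (x + RtoC k * d - x) = Rabs k * Cmod d).
  { intro k. apply Cmod_eq_scal. ring. }
  assert (Dy : forall k, Cmod (x + RtoC k * d - y) = Rabs (k - 1) * Cmod d).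
  { intro k. apply Cmod_eq_scal. rewrite RtoC_minus. unfold d. ring. }
  assert (Dx' : forall k, Cmod (x - (x + RtoC k * d)) = Rabs k * Cmod d).
  { intro k. rewrite <- Rabs_Ropp. apply Cmod_eq_scal. rewrite RtoC_opp. ring. }
  assert (Dy' : forall k, Cmod (y - (x + RtoC k * d)) = Rabs (k - 1) * Cmod d).
  { intro k. rewrite Rabs_minus_sym. apply Cmod_eq_scal. rewrite RtoC_minus. unfold d. ring. }
  apply hilbert_disk_spec; [exact Hxy | |].
  - exists (x + RtoC a * d)%C, (x + RtoC b * d)%C.
    repeat split; try assumption.
    + intro E. assert (E' : (RtoC (a - b) * d = 0)%C).
      { rewrite RtoC_minus. transitivity ((x + RtoC a * d) - (x + RtoC b * d))%C; [ring |].
        rewrite E. ring. }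
      apply (f_equal Cmod) in E'. rewrite Cmod_mult, Cmod_R, Cmod_0 in E'.
      pose proof (Rabs_pos_lt (a - b) ltac:(lra)). nra.
    + exists a. reflexivity.
    + exists b. reflexivity.
    + rewrite Dx, Dy. apply Rmult_lt_compat_r; [exact Hd |].
      rewrite !Rabs_left by lra. lra.
  - intros u v [Hu [Hv [Huv [[a' ->] [[b' ->] Hlt]]]]].
    rewrite Dx, Dy in Hlt. apply Rmult_lt_reg_r in Hlt; [| exact Hd].
    assert (a' = a) as ->.
    { destruct (roots a' Hu) as [-> | ->]; [reflexivity |].
      revert Hlt. rewrite !Rabs_pos_eq by lra. lra. }
    assert (b' = b) as ->.
    { destruct (roots b' Hv) as [-> | ->]; [contradiction | reflexivity]. }
    rewrite Dx, Dy, Dx', Dy'.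
    rewrite (Rabs_left1 (a - 1)), (Rabs_left1 a), (Rabs_pos_eq b), (Rabs_pos_eq (b - 1)) by lra.
    f_equal. field. split; lra.
Qed.

Lemma rho_disk_denom_pos x y : in_disk x -> in_disk y ->
  0 < sqrt ((1 - Cmod x ^ 2) * (1 - Cmod y ^ 2)).
Proof.
  intros Hx Hy. pose proof (Cmod_sqr_lt_1 x Hx). pose proof (Cmod_sqr_lt_1 y Hy).
  apply sqrt_lt_R0, Rmult_lt_0_compat; lra.
Qed.

Lemma sinh_half_rho_disk x y :
  sinh (rho_disk x y / 2) = Cmod (x - y) / sqrt ((1 - Cmod x ^ 2) * (1 - Cmod y ^ 2)).
Proof.
  unfold rho_disk. replace (2 * _ / 2) with (arcsinh (Cmod (x - y) / sqrt ((1 - Cmod x ^ 2) * (1 - Cmod y ^ 2))))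
    by field.
  apply sinh_arcsinh.
Qed.

Lemma sinh_half_rho_disk_sqr x y : in_disk x -> in_disk y ->
  sinh (rho_disk x y / 2) ^ 2 * ((1 - Cmod x ^ 2) * (1 - Cmod y ^ 2)) = Cmod (y - x) ^ 2.
Proof.
  intros Hx Hy. pose proof (rho_disk_denom_pos x y Hx Hy) as Hs.
  pose proof (Cmod_sqr_lt_1 x Hx). pose proof (Cmod_sqr_lt_1 y Hy).
  rewrite sinh_half_rho_disk. set (s := sqrt _) in *.
  assert (Es : s ^ 2 = (1 - Cmod x ^ 2) * (1 - Cmod y ^ 2)) by (apply pow2_sqrt; nra).
  rewrite <- Es. replace (x - y)%C with (- (y - x))%C by ring. rewrite Cmod_opp. field. lra.
Qed.

Lemma rho_disk_nonneg x y : in_disk x -> in_disk y -> 0 <= rho_disk x y.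
Proof.
  intros Hx Hy. unfold rho_disk. apply Rmult_le_pos; [lra |].
  rewrite <- arcsinh_0. apply arcsinh_le.
  apply Rle_mult_inv_pos; [apply Cmod_ge_0 | exact (rho_disk_denom_pos x y Hx Hy)].
Qed.

Lemma rho_disk_refl x : rho_disk x x = 0.
Proof.
  unfold rho_disk. replace (x - x)%C with (RtoC 0) by ring.
  rewrite Cmod_R, Rabs_R0, Rdiv_0_l, arcsinh_0. ring.
Qed.

Lemma hilbert_disk_nonneg x y : in_disk x -> in_disk y -> 0 <= hilbert_disk x y.
Proof.
  intros Hx Hy. destruct (classic (x = y)) as [<- | Hxy]; [rewrite hilbert_disk_refl; lra |].
  destruct (chord_params x y Hx Hy Hxy) as [a [b [Ha [Hb [Hau Hbv]]]]].
  rewrite (hilbert_disk_chord x y a b Hxy Ha Hb Hau Hbv), <- ln_1.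
  apply ln_le; [lra |]. apply (Rmult_le_reg_r (- a * (b - 1))); [nra |].
  unfold Rdiv. rewrite Rmult_assoc, Rinv_l by nra. nra.
Qed.

Lemma sinh_half_rho_hilbert_disk x y : in_disk x -> in_disk y -> x <> y ->
  sinh (rho_disk x y / 2) ^ 2 * (Cmod (y - x) ^ 2 * (1 - Cmod x ^ 2) + Re (x * Cconj (y - x)) ^ 2)
  = Cmod (y - x) ^ 2 * sinh (hilbert_disk x y / 2) ^ 2.
Proof.
  intros Hx Hy Hxy.
  destruct (chord_params x y Hx Hy Hxy) as [a [b [Ha [Hb [Hau Hbv]]]]].
  rewrite (hilbert_disk_chord x y a b Hxy Ha Hb Hau Hbv).
  set (R := (1 - a) * b / (- a * (b - 1))).
  assert (HR : 0 < R) by (unfold R; apply Rdiv_lt_0_compat; nra).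
  pose proof (sinh_half_ln_sqr R HR) as Hh.
  pose proof (sinh_half_rho_disk_sqr x y Hx Hy) as Hrho.
  pose proof (Cmod_sqr_add_scal x (y - x) 1) as EY.
  replace (x + RtoC 1 * (y - x))%C with y in EY by ring.
  apply unit_circle_line in Hau, Hbv.
  destruct (quadratic_vieta _ _ _ a b ltac:(lra) Hau Hbv) as [Vs Vp].
  set (A := Cmod (y - x) ^ 2) in *. set (B := Re (x * Cconj (y - x))) in *.
  set (X := Cmod x ^ 2) in *. set (Y := Cmod y ^ 2) in *.
  set (sr := sinh (rho_disk x y / 2)) in *. set (sh := sinh (ln R / 2)) in *.
  assert (HA : 0 < A) by (apply pow_lt, Cmod_sub_pos, Hxy).
  assert (EX : X = 1 + A * (a * b)) by lra.
  assert (EB : B = - A * (a + b) / 2) by lra.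
  assert (Esh : sh ^ 2 = (R - 1) ^ 2 / (4 * R)) by (rewrite <- Hh; field; lra).
  assert (HX : X < 1) by exact (Cmod_sqr_lt_1 x Hx).
  assert (HY : Y < 1) by exact (Cmod_sqr_lt_1 y Hy).
  assert (Esr : sr ^ 2 = A / ((1 - X) * (1 - Y))) by (rewrite <- Hrho; field; split; lra).
  rewrite Esr, Esh, EY, EX, EB. unfold R. field.
  repeat split; lra.
Qed.

Lemma Re_mul_Cconj_sqr_le x d : Re (x * Cconj d) ^ 2 <= Cmod x ^ 2 * Cmod d ^ 2.
Proof.
  pose proof (re_le_Cmod (x * Cconj d)) as H. rewrite Cmod_mult, Cmod_conj in H.
  rewrite <- Rpow_mult_distr, <- pow2_abs. pose proof (Rabs_pos (Re (x * Cconj d))). nra.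
Qed.

Lemma hilbert_disk_le_rho x y : in_disk x -> in_disk y -> hilbert_disk x y <= rho_disk x y.
Proof.
  intros Hx Hy. destruct (classic (x = y)) as [<- | Hxy].
  { rewrite hilbert_disk_refl, rho_disk_refl. lra. }
  pose proof (sinh_half_rho_hilbert_disk x y Hx Hy Hxy) as E.
  pose proof (Re_mul_Cconj_sqr_le x (y - x)). pose proof (Cmod_sqr_lt_1 x Hx).
  pose proof (pow_lt _ 2 (Cmod_sub_pos x y Hxy)). pose proof (pow2_ge_0 (sinh (rho_disk x y / 2))).
  cut (hilbert_disk x y / 2 <= rho_disk x y / 2); [lra |].
  apply sinh_sqr_le_iff; [pose proof (hilbert_disk_nonneg x y Hx Hy) | pose proof (rho_disk_nonneg x y Hx Hy) |]; try lra.
  apply (Rmult_le_reg_l (Cmod (y - x) ^ 2)); [lra |]. rewrite <- E. nra.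
Qed.

Lemma sinh_half_rho_le_hilbert x y : in_disk x -> in_disk y ->
  (1 - Cmod x ^ 2) * sinh (rho_disk x y / 2) ^ 2 <= sinh (hilbert_disk x y / 2) ^ 2.
Proof.
  intros Hx Hy. destruct (classic (x = y)) as [<- | Hxy].
  { rewrite hilbert_disk_refl, rho_disk_refl. unfold Rdiv. rewrite Rmult_0_l, sinh_0. lra. }
  pose proof (sinh_half_rho_hilbert_disk x y Hx Hy Hxy) as E.
  pose proof (pow_lt _ 2 (Cmod_sub_pos x y Hxy)). pose proof (pow2_ge_0 (sinh (rho_disk x y / 2))).
  pose proof (pow2_ge_0 (Re (x * Cconj (y - x)))).
  apply (Rmult_le_reg_l (Cmod (y - x) ^ 2)); [lra |]. rewrite <- E. nra.
Qed.

Lemma rho_disk_eq_hilbert x y : in_disk x -> in_disk y ->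
  Re (x * Cconj (y - x)) ^ 2 = Cmod x ^ 2 * Cmod (y - x) ^ 2 -> rho_disk x y = hilbert_disk x y.
Proof.
  intros Hx Hy Hcol. destruct (classic (x = y)) as [<- | Hxy].
  { rewrite hilbert_disk_refl, rho_disk_refl. reflexivity. }
  pose proof (sinh_half_rho_hilbert_disk x y Hx Hy Hxy) as E.
  rewrite Hcol in E. pose proof (pow_lt _ 2 (Cmod_sub_pos x y Hxy)).
  cut (rho_disk x y / 2 = hilbert_disk x y / 2); [lra |].
  apply sinh_sqr_inj; [pose proof (rho_disk_nonneg x y Hx Hy) | pose proof (hilbert_disk_nonneg x y Hx Hy) |]; try lra.
  apply (Rmult_eq_reg_l (Cmod (y - x) ^ 2)); [| lra]. rewrite <- E. ring.
Qed.

Lemma sinh_half_rho_hilbert_orth x y : in_disk x -> in_disk y -> Re (x * Cconj (y - x)) = 0 ->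
  (1 - Cmod x ^ 2) * sinh (rho_disk x y / 2) ^ 2 = sinh (hilbert_disk x y / 2) ^ 2.
Proof.
  intros Hx Hy Horth. destruct (classic (x = y)) as [<- | Hxy].
  { rewrite hilbert_disk_refl, rho_disk_refl. unfold Rdiv. rewrite Rmult_0_l, sinh_0. ring. }
  pose proof (sinh_half_rho_hilbert_disk x y Hx Hy Hxy) as E.
  rewrite Horth in E. pose proof (pow_lt _ 2 (Cmod_sub_pos x y Hxy)).
  apply (Rmult_eq_reg_l (Cmod (y - x) ^ 2)); [| lra]. rewrite <- E. ring.
Qed.

Lemma ball_rho_sub_ball_h x s t : in_disk x -> s <= t -> set_incl (ball_rho x s) (ball_h x t).
Proof.
  intros Hx Hst z [Hz Hrho]. split; [exact Hz |].
  pose proof (hilbert_disk_le_rho x z Hx Hz). lra.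
Qed.

Lemma ball_h_sub_ball_rho x t s : in_disk x -> 0 <= s ->
  sinh (t / 2) ^ 2 <= (1 - Cmod x ^ 2) * sinh (s / 2) ^ 2 ->
  set_incl (ball_h x t) (ball_rho x s).
Proof.
  intros Hx Hs Hts z [Hz Hh]. split; [exact Hz |].
  pose proof (hilbert_disk_nonneg x z Hx Hz) as Hh0.
  pose proof (rho_disk_nonneg x z Hx Hz) as Hr0.
  pose proof (sinh_half_rho_le_hilbert x z Hx Hz).
  pose proof (Cmod_sqr_lt_1 x Hx).
  assert (Hlt : sinh (hilbert_disk x z / 2) ^ 2 < sinh (t / 2) ^ 2) by (apply sinh_sqr_lt_iff; lra).
  cut (rho_disk x z / 2 < s / 2); [lra |].
  apply sinh_sqr_lt_iff; [lra | lra |].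
  apply (Rmult_lt_reg_l (1 - Cmod x ^ 2)); lra.
Qed.

Lemma in_disk_RtoC x : -1 < x < 1 -> in_disk (RtoC x).
Proof. intro Hx. unfold in_disk. rewrite Cmod_R. apply Rabs_def1; lra. Qed.

Lemma Cmod_RtoC_sqr x : Cmod (RtoC x) ^ 2 = x ^ 2.
Proof. rewrite Cmod_R. apply pow2_abs. Qed.

Lemma hilbert_disk_real x y : -1 < x -> x < y < 1 ->
  hilbert_disk (RtoC x) (RtoC y) = ln ((1 - x) * (1 + y) / ((1 + x) * (1 - y))).
Proof.
  intros Hx Hxy.
  assert (endpoint : forall e a, e = x + a * (y - x) -> Rabs e = 1 ->
    Cmod (RtoC x + RtoC a * (RtoC y - RtoC x)) = 1).
  { intros e a Ee He. rewrite <- RtoC_minus, <- RtoC_mult, <- RtoC_plus, Cmod_R, <- Ee. exact He. }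
  rewrite (hilbert_disk_chord _ _ ((-1 - x) / (y - x)) ((1 - x) / (y - x))).
  - f_equal. field. repeat split; lra.
  - intro E. apply RtoC_inj in E. lra.
  - apply Ropp_lt_cancel. rewrite Ropp_0. unfold Rdiv. rewrite Ropp_mult_distr_l.
    apply Rmult_lt_0_compat; [lra | apply Rinv_0_lt_compat; lra].
  - apply (Rmult_lt_reg_r (y - x)); [lra |]. unfold Rdiv. rewrite Rmult_assoc, Rinv_l; lra.
  - apply (endpoint (-1)); [field; lra | rewrite Rabs_left; lra].
  - apply (endpoint 1); [field; lra | apply Rabs_R1].
Qed.

Lemma rho_disk_eq_hilbert_real x y : -1 < x < 1 -> -1 < y < 1 ->
  rho_disk (RtoC x) (RtoC y) = hilbert_disk (RtoC x) (RtoC y).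
Proof.
  intros Hx Hy. apply rho_disk_eq_hilbert; try apply in_disk_RtoC; try assumption.
  rewrite <- RtoC_minus, Cmod_RtoC_sqr, Cmod_RtoC_sqr. unfold Re, Cconj, Cmult, RtoC; simpl. ring.
Qed.

Lemma ball_rho_sub_ball_h_le z0 s t : -1 < z0 < 1 -> 0 < t ->
  set_incl (ball_rho (RtoC z0) s) (ball_h (RtoC z0) t) -> s <= t.
Proof.
  intros Hz Ht Hincl. apply Rnot_lt_le. intro Hts.
  set (r := exp t). assert (Hr : 1 < r) by (unfold r; rewrite <- exp_0; apply exp_increasing; lra).
  set (y := (r * (1 + z0) - (1 - z0)) / (r * (1 + z0) + (1 - z0))).
  assert (Hden : 0 < r * (1 + z0) + (1 - z0)) by nra.
  assert (Hy : z0 < y < 1).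
  { assert (E1 : y - z0 = (r - 1) * (1 - z0) * (1 + z0) / (r * (1 + z0) + (1 - z0)))
      by (unfold y; field; lra).
    assert (E2 : 1 - y = 2 * (1 - z0) / (r * (1 + z0) + (1 - z0))) by (unfold y; field; lra).
    assert (0 < (r - 1) * (1 - z0) * (1 + z0) / (r * (1 + z0) + (1 - z0)))
      by (apply Rdiv_lt_0_compat; [apply Rmult_lt_0_compat; [apply Rmult_lt_0_compat |] |]; lra).
    assert (0 < 2 * (1 - z0) / (r * (1 + z0) + (1 - z0))) by (apply Rdiv_lt_0_compat; lra).
    lra. }
  assert (Hh : hilbert_disk (RtoC z0) (RtoC y) = t).
  { rewrite hilbert_disk_real by lra. replace ((1 - z0) * (1 + y) / ((1 + z0) * (1 - y))) with r.
    - apply ln_exp.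
    - unfold y. field. split; lra. }
  destruct (Hincl (RtoC y)) as [_ Hlt]; [| lra].
  split; [apply in_disk_RtoC; lra |].
  rewrite rho_disk_eq_hilbert_real, Hh by lra. exact Hts.
Qed.

Lemma rho_disk_orth_point z0 s : -1 < z0 < 1 -> 0 <= s ->
  exists y, in_disk y /\ Re (RtoC z0 * Cconj (y - RtoC z0)) = 0 /\ rho_disk (RtoC z0) y = s.
Proof.
  intros Hz Hs.
  set (c := 1 - z0 ^ 2). assert (Hc : 0 < c) by (unfold c; nra).
  set (sg := sinh (s / 2)). assert (Hsg : 0 <= sg) by (apply sinh_nonneg; lra).
  set (w := 1 + c * sg ^ 2). assert (Hw : 0 < w) by (unfold w; nra).
  set (l := sg * c / sqrt w).
  assert (Hl2 : l ^ 2 = sg ^ 2 * c ^ 2 / w).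
  { unfold l. unfold Rdiv. rewrite !Rpow_mult_distr, pow_inv, pow2_sqrt; lra. }
  assert (Hlc : l ^ 2 < c).
  { rewrite Hl2. apply (Rmult_lt_reg_r w); [exact Hw |].
    unfold Rdiv. rewrite Rmult_assoc, Rinv_l by lra. unfold w. nra. }
  assert (Hy2 : Cmod (z0, l) ^ 2 = z0 ^ 2 + l ^ 2) by (rewrite Cmod2_alt; reflexivity).
  assert (Hy : in_disk (z0, l)).
  { unfold in_disk. pose proof (Cmod_ge_0 (z0, l)). unfold c in Hlc. nra. }
  exists (z0, l). split; [exact Hy | split].
  { unfold Re, Cconj, Cmult, Cminus, Cplus, Copp, RtoC; simpl. ring. }
  pose proof (sinh_half_rho_disk_sqr _ _ (in_disk_RtoC z0 Hz) Hy) as E.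
  assert (Hd : Cmod ((z0, l) - RtoC z0) ^ 2 = l ^ 2).
  { rewrite Cmod2_alt. unfold Re, Im, Cminus, Cplus, Copp, RtoC; simpl. ring. }
  rewrite Cmod_RtoC_sqr, Hy2, Hd in E.
  cut (rho_disk (RtoC z0) (z0, l) / 2 = s / 2); [lra |].
  apply sinh_sqr_inj; [pose proof (rho_disk_nonneg _ _ (in_disk_RtoC z0 Hz) Hy); lra | lra |].
  assert (EP : (1 - z0 ^ 2) * (1 - (z0 ^ 2 + l ^ 2)) = c ^ 2 / w).
  { transitivity (c * (c - l ^ 2)); [unfold c; ring |].
    rewrite Hl2. assert (Hw0 : w <> 0) by lra. unfold w in *. field. exact Hw0. }
  fold sg. apply (Rmult_eq_reg_r ((1 - z0 ^ 2) * (1 - (z0 ^ 2 + l ^ 2)))).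
  - rewrite E, EP, Hl2. field. lra.
  - rewrite EP. apply Rgt_not_eq, Rdiv_lt_0_compat; nra.
Qed.

Lemma ball_h_sub_ball_rho_iff z0 t s : -1 < z0 < 1 -> 0 <= t -> 0 <= s ->
  set_incl (ball_h (RtoC z0) t) (ball_rho (RtoC z0) s) <->
  sinh (t / 2) ^ 2 <= (1 - z0 ^ 2) * sinh (s / 2) ^ 2.
Proof.
  intros Hz Ht Hs. pose proof (in_disk_RtoC z0 Hz) as Hx0. split.
  - intro Hincl. apply Rnot_lt_le. intro Hlt.
    destruct (rho_disk_orth_point z0 s Hz Hs) as [y [Hy [Horth Hrho]]].
    pose proof (sinh_half_rho_hilbert_orth _ _ Hx0 Hy Horth) as E.
    rewrite Cmod_RtoC_sqr, Hrho in E.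
    destruct (Hincl y) as [_ Hr]; [| lra].
    split; [exact Hy |].
    cut (hilbert_disk (RtoC z0) y / 2 < t / 2); [lra |].
    apply sinh_sqr_lt_iff; [pose proof (hilbert_disk_nonneg _ _ Hx0 Hy) | |]; lra.
  - intro Hts. apply ball_h_sub_ball_rho; [exact Hx0 | exact Hs |]. rewrite Cmod_RtoC_sqr. exact Hts.
Qed.

Lemma ball_h_sub_ball_rho_iff_radius z0 t s : -1 < z0 < 1 -> 0 <= t -> 0 <= s ->
  set_incl (ball_h (RtoC z0) t) (ball_rho (RtoC z0) s) <->
  2 * arcsinh (sinh (t / 2) / sqrt (1 - z0 ^ 2)) <= s.
Proof.
  intros Hz Ht Hs. rewrite ball_h_sub_ball_rho_iff by assumption.
  set (c := 1 - z0 ^ 2). assert (Hc : 0 < c) by (unfold c; nra).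
  set (sg := sinh (t / 2) / sqrt c).
  assert (Hsg : 0 <= sg) by (apply Rle_mult_inv_pos; [apply sinh_nonneg; lra | apply sqrt_lt_R0, Hc]).
  assert (Hsg2 : sinh (t / 2) ^ 2 = c * sinh (arcsinh sg) ^ 2).
  { rewrite sinh_arcsinh. unfold sg, Rdiv. rewrite Rpow_mult_distr, pow_inv, pow2_sqrt by lra. field. lra. }
  assert (Ha : 0 <= arcsinh sg) by (rewrite <- arcsinh_0; apply arcsinh_le, Hsg).
  rewrite Hsg2. split; intro H.
  - cut (arcsinh sg <= s / 2); [lra |]. apply sinh_sqr_le_iff; [lra | lra | nra].
  - apply Rmult_le_compat_l; [lra |]. apply sinh_sqr_le_iff; lra.
Qed.

Lemma tanh_arcsinh_sinh_half_div t c : 0 < t -> 0 < c ->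
  tanh (arcsinh (sinh (t / 2) / sqrt c)) = (exp t - 1) / sqrt ((exp t - 1) ^ 2 + 4 * exp t * c).
Proof.
  intros Ht Hc. rewrite tanh_arcsinh.
  set (S := sinh (t / 2)). assert (HS : 0 < S) by (apply sinh_pos; lra).
  set (r := exp t). assert (Hr : 1 < r) by (unfold r; rewrite <- exp_0; apply exp_increasing; lra).
  pose proof (sinh_half_sqr t) as HSr. fold r S in HSr.
  set (q := sqrt c). assert (Hq : 0 < q) by (apply sqrt_lt_R0; lra).
  assert (Hq2 : q ^ 2 = c) by (apply pow2_sqrt; lra).
  set (w := sqrt (1 + (S / q) ^ 2)). assert (Hw : 0 < w) by (apply sqrt_lt_R0; nra).
  assert (Hw2 : w ^ 2 = 1 + (S / q) ^ 2) by (apply pow2_sqrt; nra).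
  set (m := sqrt ((r - 1) ^ 2 + 4 * r * c)). assert (Hm : 0 < m) by (apply sqrt_lt_R0; nra).
  assert (Hm2 : m ^ 2 = (r - 1) ^ 2 + 4 * r * c) by (apply pow2_sqrt; nra).
  assert (Hcross : S * m = (r - 1) * q * w).
  { apply Rsqr_inj; [nra | apply Rmult_le_pos; nra |]. unfold Rsqr.
    replace (S * m * (S * m)) with (S ^ 2 * m ^ 2) by ring.
    replace ((r - 1) * q * w * ((r - 1) * q * w)) with ((r - 1) ^ 2 * (q ^ 2 * w ^ 2)) by ring.
    rewrite Hm2, Hw2, <- HSr, <- Hq2. field. lra. }
  apply (Rmult_eq_reg_r (q * w * m)); [| apply Rgt_not_eq, Rmult_lt_0_compat; nra].
  field_simplify; [rewrite Hcross; ring | lra | lra].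
Qed.

Theorem mainTheorem9 (z0 t : R) (hz0 : 0 < z0 < 1) (ht : 0 < t) :
  let r := exp t in
  (set_incl (ball_rho (RtoC z0) t) (ball_h (RtoC z0) t) /\
   forall s : R, 0 < s ->
     set_incl (ball_rho (RtoC z0) s) (ball_h (RtoC z0) t) -> s <= t) /\
  (exists s : R, 0 < s /\
     tanh (s / 2) = (r - 1) / sqrt ((r + 1) ^ 2 - 4 * r * z0 ^ 2) /\
     set_incl (ball_h (RtoC z0) t) (ball_rho (RtoC z0) s) /\
     forall s' : R, 0 < s' ->
       set_incl (ball_h (RtoC z0) t) (ball_rho (RtoC z0) s') -> s <= s').
Proof.
  intro r. assert (Hz : -1 < z0 < 1) by lra. split.
  { split; [apply ball_rho_sub_ball_h; [apply in_disk_RtoC, Hz | lra] |].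
    intros s _. exact (ball_rho_sub_ball_h_le z0 s t Hz ht). }
  set (s := 2 * arcsinh (sinh (t / 2) / sqrt (1 - z0 ^ 2))).
  assert (Hs : 0 < s).
  { pose proof (arcsinh_lt 0 (sinh (t / 2) / sqrt (1 - z0 ^ 2))) as H. rewrite arcsinh_0 in H.
    unfold s. apply Rmult_lt_0_compat, H; [lra |].
    apply Rdiv_lt_0_compat; [apply sinh_pos; lra | apply sqrt_lt_R0; nra]. }
  exists s. split; [exact Hs | split; [| split]].
  - unfold s. replace (2 * _ / 2) with (arcsinh (sinh (t / 2) / sqrt (1 - z0 ^ 2))) by field.
    rewrite tanh_arcsinh_sinh_half_div by nra. fold r. do 2 f_equal. ring.
  - apply ball_h_sub_ball_rho_iff_radius; [lra | lra | lra | apply Rle_refl].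
  - intros s' Hs' Hincl. apply ball_h_sub_ball_rho_iff_radius in Hincl; unfold s; lra.
Qed.
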